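(* Let $P=\operatorname{conv}(W(\Lambda))$ be a full-dimensional $W$-symmetric polytope, let $F$ be a face of $P$, and let $\alpha\in R$. The following are equivalent: (1) $r_\alpha(F)=F$; (2) the hyperplane $H_\alpha$ passes through the barycenter of $F$; (3) $H_\alpha$ passes through a relative interior point of $F$. If moreover $P$ is non-degenerate, these are also equivalent to: (4) $F\cap H_\alpha\neq\emptyset$; and in that case (when $P$ is non-degenerate and the conditions hold), $\langle \ell_{F'},\alpha\rangle=0$ for every facet $F'$ of $P$ containing $F$.
   Context: $V$ is a real Euclidean space of dimension $n$, $R\subset V$ a reduced root system spanning $V$ (not necessarily crystallographic) with simple system $S=\{\alpha_1,\dots,\alpha_n\}$; $r_\alpha(x)=x-\frac{2\langle x,\alpha\rangle}{\langle \alpha,\alpha\rangle}\alpha$, $H_\alpha$ is the hyperplane fixed pointwise by $r_\alpha$, and $W$ is the group generated by the $r_{\alpha_i}$. $C_S=\{x:\langle x,\alpha_i\rangle\ge0\ \forall i\}$, $\Lambda\subset C_S$ finite. $P$ is non-degenerate if no vertex of $P$ lies on the boundary of $C_S$. $\ell_{F'}$ denotes an outward normal vector of the facet $F'$. *)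

From HB Require Import structures.
From mathcomp Require Import all_boot all_order all_algebra.
From mathcomp Require Import boolp classical_sets fsbigop reals.
Set Implicit Arguments. Unset Strict Implicit. Unset Printing Implicit Defensive.
Import Order.TTheory GRing.Theory Num.Theory.
Local Open Scope ring_scope.
Local Open Scope classical_set_scope.

Section Defs.
Variables (R : realType) (n : nat).
Notation V := 'rV[R]_n.

Definition dotp (x y : V) : R := \sum_(i < n) x 0 i * y 0 i.

Definition refl (a x : V) : V := x - ((2 * dotp x a) / dotp a a) *: a.

Definition hyperplane (a : V) : set V := [set x | dotp x a = 0].

Definition lincomb k (c : 'I_k -> R) (p : 'I_k -> V) : V := \sum_(i < k) c i *: p i.

(* reduced root system spanning V, not necessarily crystallographic *)
Definition root_system (rs : seq V) : Prop :=
  [/\ (forall a, a \in rs -> a != 0),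
      (forall a b, a \in rs -> b \in rs -> refl a b \in rs),
      (forall a (c : R), a \in rs -> c *: a \in rs -> c = 1 \/ c = -1) &
      (forall v : V, exists k (c : 'I_k -> R) (p : 'I_k -> V),
          (forall i, p i \in rs) /\ v = lincomb c p)].

Definition simple_system (rs : seq V) (S : 'I_n -> V) : Prop :=
  [/\ (forall i, S i \in rs),
      (forall c : 'I_n -> R, lincomb c S = 0 -> forall i, c i = 0) &
      (forall b, b \in rs -> exists c : 'I_n -> R, b = lincomb c S /\
          ((forall i, 0 <= c i) \/ (forall i, c i <= 0)))].

(* W : the group generated by the simple reflections (as maps V -> V);
   since each r_{a_i} is an involution, the monoid it generates is the group. *)
Inductive inW (S : 'I_n -> V) : (V -> V) -> Prop :=
  | inW_id : inW S id
  | inW_step i w : inW S w -> inW S (refl (S i) \o w).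

Definition chamber (S : 'I_n -> V) : set V := [set x | forall i, 0 <= dotp x (S i)].

Definition Worbit (S : 'I_n -> V) (Lam : seq V) : set V :=
  [set x | exists w, inW S w /\ exists l, l \in Lam /\ x = w l].

Definition conv (A : set V) : set V :=
  [set x | exists k (c : 'I_k -> R) (p : 'I_k -> V),
     [/\ (forall i, A (p i)), (forall i, 0 <= c i), \sum_(i < k) c i = 1
       & x = lincomb c p]].

Definition aff (A : set V) : set V :=
  [set x | exists k (c : 'I_k -> R) (p : 'I_k -> V),
     [/\ (forall i, A (p i)), \sum_(i < k) c i = 1 & x = lincomb c p]].

Definition full_dim (P : set V) : Prop :=
  forall c : V, (forall x y, P x -> P y -> dotp c x = dotp c y) -> c = 0.

(* (nonempty) face of P: intersection with a supporting hyperplane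
   (c = 0 gives P itself) *)
Definition face (P F : set V) : Prop :=
  exists (c : V) (b : R), (forall x, P x -> dotp c x <= b) /\
    F = P `&` [set x | dotp c x = b] /\ F !=set0.

Definition vertex (P : set V) (v : V) : Prop := face P [set v].

Definition vertices_of (P F : set V) : set V := [set v | vertex P v /\ F v].

Definition barycenter (P F : set V) : V :=
  (\sum_(v \in vertices_of P F) (1 : R))^-1 *: \sum_(v \in vertices_of P F) v.

Definition relint (F : set V) : set V :=
  [set x | F x /\ exists eps : R, 0 < eps /\
     forall y, aff F y -> dotp (y - x) (y - x) < eps -> F y].

Definition facet (P F : set V) : Prop :=
  face P F /\ F <> P /\ forall G, face P G -> F `<=` G -> G = F \/ G = P.

Definition outward_normal (P F : set V) (l : V) : Prop :=
  l != 0 /\ exists b : R, (forall x, P x -> dotp l x <= b) /\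
    F = P `&` [set x | dotp l x = b].

Definition nondegenerate_poly (S : 'I_n -> V) (P : set V) : Prop :=
  forall v, vertex P v -> chamber S v -> forall i, dotp v (S i) != 0.

End Defs.

(* Every root reflection [r_a] lies in W: descending along simple reflections,
   a positive root is conjugate to a simple one.  Hence [r_a] permutes the
   finite orbit W(Lambda), and maps P and its vertices onto themselves.

   Let F = P /\ {<c, x> = b}.  If [r_a F = F], then [r_a] permutes the vertices
   of F and the orbit points on F, so it fixes the barycenter of F and the
   centroid of those orbit points, which is a relative interior point of F.
   Conversely, if the barycenter is fixed, summing [<r_a c, v> <= b] over the
   vertices v of F shows that [<r_a c, .>] attains b at every vertex of F, hence
   on F, i.e. [r_a F = F]; if a relative interior point x is fixed, the same
   follows by pushing x slightly beyond itself along each segment of F.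
   Finally, if no vertex v satisfies <v, a> = 0, a vertex v such that v and
   [r_a v] lie on a common supporting hyperplane {<l, x> = b'} forces
   <l, a> = 0.  A point of F on H_a makes <c + r_a c, .> reach 2b, at such a
   vertex for l = c, so [r_a c = c] and [r_a F = F]; a vertex of a stable F
   is such a vertex for the normal l of any facet containing F. *)

From HB Require Import structures.
From mathcomp Require Import all_boot all_order all_algebra.
From mathcomp Require Import boolp classical_sets fsbigop reals cardinality.
From mathcomp Require Import ring lra.
Import Order.TTheory GRing.Theory Num.Theory.
Set Implicit Arguments. Unset Strict Implicit. Unset Printing Implicit Defensive.
Local Open Scope ring_scope.
Local Open Scope classical_set_scope.

Lemma count_ltn (T : eqType) (p q : pred T) (s : seq T) x :
  subpred p q -> x \in s -> q x -> ~~ p x -> (count p s < count q s)%N.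
Proof.
move=> pq; elim: s => //= y s IH; rewrite inE => /orP[/eqP <-|xs] qx npx.
  by rewrite qx (negPf npx) add0n add1n ltnS sub_count.
rewrite -addnS leq_add ?IH //.
by case: (boolP (p y)) => // /pq ->.
Qed.

Lemma image_involutive_eq (T : Type) (f : T -> T) (A : set T) :
  involutive f -> f @` A = A <-> {homo f : x / A x}.
Proof.
move=> fK; split=> [fAA x Ax|fA]; first by rewrite -fAA; exists x.
apply/seteqP; split=> [_ [x Ax <-]|x Ax]; first exact: fA.
by exists (f x); rewrite ?fK //; apply: fA.
Qed.

Lemma ler_sum_eq_seq (R : numDomainType) (I : eqType) (s : seq I) (F G : I -> R) :
  (forall i, i \in s -> F i <= G i) -> \sum_(i <- s) F i = \sum_(i <- s) G i ->
  forall i, i \in s -> F i = G i.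
Proof.
move=> FG E i si; apply/eqP; rewrite eq_sym -subr_eq0.
have : \sum_(j <- s | j \in s) (G j - F j) == 0 by rewrite -big_seq sumrB E subrr.
rewrite psumr_eq0 => [/allP/(_ i si)|j sj]; first by rewrite si.
by rewrite subr_ge0 FG.
Qed.

Section SeqExtrema.
Variables (R : realFieldType) (T : eqType).

Lemma seq_argmax (g : T -> R) (P : pred T) (s : seq T) : has P s ->
  exists2 x, x \in s & P x /\ forall y, y \in s -> P y -> g y <= g x.
Proof.
elim: s => //= z s IH Pzs.
have [/IH [x xs [Px Hx]]|Ns] := boolP (has P s); last first.
  have Pz : P z by move: Pzs; rewrite (negPf Ns) orbF.
  exists z; first exact: mem_head.
  split=> // y; rewrite inE => /orP[/eqP-> //|ys Py].
  by case/hasP: Ns; exists y.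
have [/andP[Pz lt_xz]|ge_xz] := boolP (P z && (g x < g z)).
  exists z; first exact: mem_head.
  split=> // y; rewrite inE => /orP[/eqP-> //|ys Py].
  exact: le_trans (Hx _ ys Py) (ltW lt_xz).
exists x; first by rewrite inE xs orbT.
split=> // y; rewrite inE => /orP[/eqP-> Pz|ys Py]; last exact: Hx.
by move: ge_xz; rewrite Pz leNgt.
Qed.

Lemma exists_small_scale (a b : T -> R) (s : seq T) :
  exists2 e, 0 < e & forall x, x \in s -> 0 < a x -> e * `|b x| < a x.
Proof.
elim: s => [|z s [e e0 He]]; first by exists 1.
have [az|az] := ltP 0 (a z); last first.
  by exists e => // x; rewrite inE => /orP[/eqP-> /lt_le_trans/(_ az)|/He//]; rewrite ltxx.
have bz1 : 0 < `|b z| + 1 by rewrite ltr_wpDl.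
set q := a z / (`|b z| + 1).
exists (Num.min e q); first by rewrite lt_min e0 divr_gt0.
move=> x; rewrite inE => /orP[/eqP-> _|xs ax].
  have min_q : Num.min e q <= q by rewrite ge_min lexx orbT.
  apply: le_lt_trans (ler_wpM2r (normr_ge0 _) min_q) _.
  by rewrite mulrAC ltr_pdivrMr // ltr_pM2l // ltrDl.
have min_e : Num.min e q <= e by rewrite ge_min lexx.
exact: le_lt_trans (ler_wpM2r (normr_ge0 _) min_e) (He x xs ax).
Qed.

End SeqExtrema.

Section InnerProduct.
Variables (R : realType) (n : nat).
Notation V := 'rV[R]_n.
Implicit Types (x y z a : V) (t : R).

Lemma dotpC x y : dotp x y = dotp y x.
Proof. by apply: eq_bigr => i _; rewrite mulrC. Qed.

Lemma dotp_is_linear x : linear (dotp x : V -> R^o).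
Proof.
move=> t y z; rewrite /dotp scaler_sumr -big_split.
by apply: eq_bigr => i _; rewrite !mxE mulrDr [_ *: _]mulrCA.
Qed.

HB.instance Definition _ x :=
  GRing.isLinear.Build R V R^o *:%R (dotp x) (dotp_is_linear x).

Lemma dotpZr t x y : dotp x (t *: y) = t * dotp x y.
Proof. exact: linearZ. Qed.

Lemma dotpDl x y z : dotp (x + y) z = dotp x z + dotp y z.
Proof. by rewrite dotpC raddfD /= !(dotpC z). Qed.

Lemma dotpZl t x y : dotp (t *: x) y = t * dotp x y.
Proof. by rewrite dotpC dotpZr dotpC. Qed.

Lemma dotpNl x y : dotp (- x) y = - dotp x y.
Proof. by rewrite dotpC raddfN /= dotpC. Qed.

Lemma dotpBl x y z : dotp (x - y) z = dotp x z - dotp y z.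
Proof. by rewrite dotpC raddfB /= !(dotpC z). Qed.

Lemma dotp_lincomb x k (c : 'I_k -> R) (p : 'I_k -> V) :
  dotp x (lincomb c p) = \sum_i c i * dotp x (p i).
Proof. by rewrite /lincomb raddf_sum; apply: eq_bigr => i _; rewrite /= dotpZr. Qed.

Lemma sqr_coord_le_dotp x (k : 'I_n) : x 0 k ^+ 2 <= dotp x x.
Proof.
rewrite /dotp (bigD1 k) //= expr2 lerDl.
by apply: sumr_ge0 => i _; rewrite -expr2 sqr_ge0.
Qed.

Lemma dotpp_ge0 x : 0 <= dotp x x.
Proof. by apply: sumr_ge0 => i _; rewrite -expr2 sqr_ge0. Qed.

Lemma dotpp_eq0 x : (dotp x x == 0) = (x == 0).
Proof.
apply/eqP/eqP => [x0|->]; last by rewrite raddf0.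
apply/rowP => k; rewrite mxE; apply/eqP; rewrite -sqrf_eq0 eq_le sqr_ge0 andbT.
by rewrite -x0 sqr_coord_le_dotp.
Qed.

Lemma dotpp_gt0 x : (0 < dotp x x) = (x != 0).
Proof. by rewrite lt_def dotpp_eq0 dotpp_ge0 andbT. Qed.

Lemma refl_is_linear a : linear (refl a).
Proof.
move=> t x y; rewrite /refl dotpDl dotpZl scalerBr scalerA addrACA -opprD.
by rewrite -scalerDl; congr (_ - _ *: _); ring.
Qed.

HB.instance Definition _ a :=
  GRing.isLinear.Build R V V *:%R (refl a) (refl_is_linear a).

Lemma dotp_refl_normal a x : a != 0 -> dotp (refl a x) a = - dotp x a.
Proof.
by rewrite -dotpp_gt0 => a0; rewrite /refl dotpBl dotpZl mulfVK ?gt_eqF //; ring.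
Qed.

Lemma refl_self a : a != 0 -> refl a a = - a.
Proof.
rewrite -dotpp_gt0 => a0; rewrite /refl mulfK ?gt_eqF //.
by rewrite scaler_nat mulr2n opprD addrA subrr sub0r.
Qed.

Lemma reflK a : a != 0 -> involutive (refl a).
Proof.
move=> a0 x; rewrite [in LHS]/refl dotp_refl_normal //.
by rewrite mulrN mulNr scaleNr raddfN opprK subrK.
Qed.

Lemma refl_dotpC a x y : dotp (refl a x) y = dotp x (refl a y).
Proof.
rewrite /refl dotpBl dotpZl raddfB /= dotpZr; congr (_ - _).
by rewrite (dotpC a y) (dotpC x a); ring.
Qed.

Lemma reflN a : refl (- a) =1 refl a.
Proof.
move=> x; rewrite /refl -(scaleN1r a) dotpZr !dotpZl dotpZr !mulN1r opprK scalerA.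
by congr (_ - _ *: _); ring.
Qed.

Lemma refl_on_hyperplane a x : dotp x a = 0 -> refl a x = x.
Proof. by move=> xa; rewrite /refl xa mulr0 mul0r scale0r subr0. Qed.

Lemma refl_fixed a x : a != 0 -> (refl a x == x) = (dotp x a == 0).
Proof.
move=> a0; apply/idP/eqP => [|/refl_on_hyperplane/eqP //].
rewrite /refl -subr_eq0 addrAC subrr add0r oppr_eq0 scaler_eq0 (negPf a0) orbF.
by rewrite !mulf_eq0 invr_eq0 dotpp_eq0 (negPf a0) pnatr_eq0 /= orbF => /eqP.
Qed.

Lemma refl_dotp_invariant a c v : a != 0 -> dotp c (refl a v) = dotp c v ->
  dotp v a != 0 -> dotp c a = 0.
Proof.
move=> a0 /eqP; rewrite /refl raddfB /= dotpZr -subr_eq0 addrAC subrr add0r.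
rewrite oppr_eq0 !mulf_eq0 invr_eq0 dotpp_eq0 (negPf a0) pnatr_eq0 /= orbF.
by case/orP=> [->|/eqP].
Qed.

Lemma refl_conj s a : s != 0 ->
  refl (refl s a) =1 refl s \o refl a \o refl s.
Proof.
move=> s0 y /=; rewrite [refl a _]/refl raddfB /= linearZ /= reflK //.
by rewrite [LHS]/refl !refl_dotpC reflK.
Qed.

End InnerProduct.

Section RootSystem.
Variables (R : realType) (n : nat) (rs : seq 'rV[R]_n) (S : 'I_n -> 'rV[R]_n).
Hypotheses (Hrs : root_system rs) (HS : simple_system rs S).
Notation V := 'rV[R]_n.
Implicit Types (a b x : V).

Lemma root_neq0 b : b \in rs -> b != 0.
Proof. by case: Hrs => H _ _ _; apply: H. Qed.

Lemma refl_root a b : a \in rs -> b \in rs -> refl a b \in rs.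
Proof. by case: Hrs => _ H _ _; apply: H. Qed.

Lemma simple_root i : S i \in rs.
Proof. by case: HS. Qed.

Lemma simple_neq0 i : S i != 0.
Proof. exact/root_neq0/simple_root. Qed.

Lemma root_opp a : a \in rs -> - a \in rs.
Proof. by move=> ra; rewrite -refl_self ?root_neq0 ?refl_root. Qed.

Lemma inW_comp w1 w2 : inW S w1 -> inW S w2 -> exists2 w, inW S w & w =1 w1 \o w2.
Proof.
move=> W1 W2; elim: W1 => [|i w _ [w' W' E]]; first by exists w2.
by exists (refl (S i) \o w') => [|x /=]; [constructor | rewrite E].
Qed.

Lemma inW_inv w : inW S w -> exists2 w', inW S w' & cancel w w'.
Proof.
elim=> [|i u _ [u' Wu' K]]; first by exists id => //; constructor.
have [v Wv E] := inW_comp Wu' (inW_step i (inW_id S)).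
by exists v => // x; rewrite E /= reflK ?simple_neq0.
Qed.

Lemma inW_dotp_root w b : inW S w -> b \in rs ->
  exists2 b', b' \in rs & forall x, dotp (w x) b = dotp x b'.
Proof.
move=> Ww; elim: Ww b => [|i u _ IH] b rb; first by exists b.
have [b' rb' E] := IH _ (refl_root (simple_root i) rb).
by exists b' => // x /=; rewrite refl_dotpC E.
Qed.

Lemma lincomb_simple_inj (c d : 'I_n -> R) : lincomb c S = lincomb d S -> c =1 d.
Proof.
move=> E i; apply/eqP; rewrite -subr_eq0; apply/eqP; case: HS => _ indep _.
apply: (indep (fun j => c j - d j)); rewrite /lincomb.
under eq_bigr do rewrite scalerBl.
by rewrite sumrB -!/(lincomb _ _) E subrr.
Qed.

Definition coords b : 'I_n -> R := xget 0 [set c : V | b = lincomb (c 0) S] 0.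

Lemma coords_lincomb (c : 'I_n -> R) : coords (lincomb c S) =1 c.
Proof.
apply: lincomb_simple_inj; rewrite /coords; set P := [set _ | _].
apply/esym/(@xgetPex _ 0 P); exists (\row_j c j).
by apply: eq_bigr => j _; rewrite mxE.
Qed.

Lemma root_coords b : b \in rs -> b = lincomb (coords b) S /\
  ((forall i, 0 <= coords b i) \/ (forall i, coords b i <= 0)).
Proof.
case: HS => _ _ /[apply] -[c [-> sgn]].
split; first by apply: eq_bigr => i _; rewrite coords_lincomb.
by case: sgn => H; [left|right] => i; rewrite coords_lincomb.
Qed.

Definition height b := \sum_i coords b i.

Definition positive_root b := (b \in rs) && [forall i, 0 <= coords b i].

Lemma positive_root_or_opp b : b \in rs -> positive_root b \/ positive_root (- b).
Proof.
move=> rb; have [Eb [pos|neg]] := root_coords rb; [left|right].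
  by rewrite /positive_root rb; apply/forallP.
rewrite /positive_root root_opp //; apply/forallP => i.
have -> : - b = lincomb (fun j => - coords b j) S.
  by rewrite [in LHS]Eb /lincomb -sumrN; apply: eq_bigr => j _; rewrite scaleNr.
by rewrite coords_lincomb oppr_ge0.
Qed.

Lemma refl_multiple_simple a i : a \in rs ->
  (forall j, j != i -> coords a j = 0) -> refl a =1 refl (S i).
Proof.
move=> ra Hi; have [Ea _] := root_coords ra.
have {}Ea : a = coords a i *: S i.
  rewrite [LHS]Ea /lincomb (bigD1 i) //= big1 ?addr0 // => j /Hi ->.
  by rewrite scale0r.
case: Hrs => _ _ reduced _; have := ra; rewrite Ea.
by case/(reduced _ _ (simple_root i)) => -> x; rewrite ?scale1r ?scaleN1r ?reflN.
Qed.

Lemma positive_root_dotp_simple_gt0 a : positive_root a -> exists i, 0 < dotp a (S i).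
Proof.
case/andP=> ra /forallP pa; apply: contra_neqP (root_neq0 ra) => /forallNP H.
apply/eqP; rewrite -dotpp_eq0 eq_le dotpp_ge0 andbT; have [Ea _] := root_coords ra.
rewrite {2}Ea dotp_lincomb; apply: sumr_le0 => j _.
by rewrite mulr_ge0_le0 // leNgt; apply/negP/H.
Qed.

Lemma refl_simple_descent a i : positive_root a -> 0 < dotp a (S i) ->
  (exists2 j, j != i & coords a j != 0) ->
  positive_root (refl (S i) a) /\ height (refl (S i) a) < height a.
Proof.
move=> /andP[ra /forallP pa] ai [j ji aj].
set k := 2 * dotp a (S i) / dotp (S i) (S i).
have k0 : 0 < k by rewrite divr_gt0 ?mulr_gt0 ?dotpp_gt0 ?simple_neq0.
have rb : refl (S i) a \in rs by rewrite refl_root ?simple_root.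
have cb l : coords (refl (S i) a) l = coords a l - (l == i)%:R * k.
  suff -> : refl (S i) a = lincomb (fun l => coords a l - (l == i)%:R * k) S.
    by rewrite coords_lincomb.
  have [Ea _] := root_coords ra; rewrite [in LHS]/refl -/k {1}Ea /lincomb.
  rewrite (bigD1 i) //= [in RHS](bigD1 i) //= eqxx mul1r scalerBl addrAC.
  congr (_ + _).
  by apply: eq_bigr => m /negPf ->; rewrite mul0r subr0.
split.
  rewrite /positive_root rb /=; apply/forallP.
  have [_ [//|neg]] := root_coords rb.
  have := neg j; rewrite cb (negPf ji) mul0r subr0 => aj0.
  by have := pa j; rewrite le_eqVlt eq_sym (negPf aj) /= ltNge aj0.
rewrite /height (eq_bigr _ (fun l _ => cb l)) sumrB ltrBlDr ltrDl.
by rewrite (bigD1 i) //= eqxx mul1r big1 ?addr0 // => l /negPf ->; rewrite mul0r.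
Qed.

Variable Lam : seq V.
Notation O := (Worbit S Lam).

Lemma Worbit_refl_simple i x : O x -> O (refl (S i) x).
Proof.
move=> [w [Ww [l [Ll ->]]]]; exists (refl (S i) \o w).
by split; [constructor | exists l].
Qed.

(* Descent on the number of positive roots of smaller height: a positive root
   is either a simple root or [refl (S i) b] for a lower positive root [b],
   and then [refl a = refl (S i) \o refl b \o refl (S i)]. *)
Lemma Worbit_refl_positive a x : positive_root a -> O x -> O (refl a x).
Proof.
pose below a := count (fun b => positive_root b && (height b < height a)) rs.
have [k] := ubnP (below a); elim: k a x => // k IH a x lt_ak pa Ox.
have [i ai] := positive_root_dotp_simple_gt0 pa.
have ra : a \in rs by case/andP: pa.
have [[j ji aj]|single] := pselect (exists2 j, j != i & coords a j != 0); last first.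
  rewrite (@refl_multiple_simple a i) //; first exact: Worbit_refl_simple.
  by move=> j ji; apply/eqP/negPn/negP => aj; apply: single; exists j.
have [pb lt_ba] := refl_simple_descent pa ai (ex_intro2 _ _ j ji aj).
set b := refl (S i) a in pb lt_ba.
have -> : a = refl (S i) b by rewrite reflK ?simple_neq0.
rewrite refl_conj ?simple_neq0 //=.
apply/Worbit_refl_simple/IH/Worbit_refl_simple => //.
rewrite -ltnS (leq_trans _ lt_ak) // ltnS (@count_ltn _ _ _ _ b) //.
- by move=> y /andP[-> /lt_trans]; apply.
- by case/andP: pb.
- by rewrite pb.
- by rewrite ltxx andbF.
Qed.

Lemma Worbit_refl_root a x : a \in rs -> O x -> O (refl a x).
Proof.
move=> ra; have [pa|pna] := positive_root_or_opp ra; first exact: Worbit_refl_positive.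
by rewrite -reflN; apply: Worbit_refl_positive.
Qed.

End RootSystem.

Section WorbitFinite.
Variables (R : realType) (n : nat) (rs : seq 'rV[R]_n) (S : 'I_n -> 'rV[R]_n).
Hypotheses (Hrs : root_system rs) (HS : simple_system rs S).
Variable Lam : seq 'rV[R]_n.
Notation V := 'rV[R]_n.

Lemma roots_orthogonal_eq0 x : (forall b, b \in rs -> dotp x b = 0) -> x = 0.
Proof.
move=> xrs; apply/eqP; rewrite -dotpp_eq0.
case: Hrs => _ _ _ /(_ x) [k [c [p [prs {2}->]]]].
by rewrite dotp_lincomb big1 // => i _; rewrite xrs ?mulr0.
Qed.

(* A point of the orbit is determined by its inner products with the roots,
   and these lie in the finite set of the [dotp l b], [l \in Lam], [b \in rs]. *)
Lemma Worbit_finite : finite_set (Worbit S Lam).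
Proof.
pose D := [seq dotp l b | l <- Lam, b <- rs].
pose Y := [set x : V | forall b, b \in rs -> dotp x b \in D].
apply: (sub_finite_set (B := Y)).
  move=> _ [w [Ww [l [Ll ->]]]] b rb /=.
  have [b' rb' ->] := inW_dotp_root Hrs HS Ww rb.
  by apply/allpairsP; exists (l, b').
pose enc (x : V) : {ffun 'I_(size rs) -> 'I_(size D).+1} :=
  [ffun j : 'I_(size rs) => inord (index (dotp x rs`_j) D)].
have enc_inj : {in Y &, injective enc}.
  move=> x y /set_mem Yx /set_mem Yy /ffunP Exy; apply/subr0_eq.
  apply: roots_orthogonal_eq0 => b rb; rewrite dotpBl; apply/eqP; rewrite subr_eq0; apply/eqP.
  have jb : (index b rs < size rs)%N by rewrite index_mem.
  have := Exy (Ordinal jb); rewrite !ffunE /= nth_index //.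
  move/(congr1 val); rewrite /= !inordK ?ltnS ?index_size // => Eidx.
  by rewrite -(nth_index 0 (Yx b rb)) Eidx nth_index //; apply: Yy.
by rewrite -(eq_finite_set (inj_card_eq enc_inj)); apply: finite_finset.
Qed.

End WorbitFinite.

Section ConvexHull.
Variables (R : realType) (n : nat).
Notation V := 'rV[R]_n.
Implicit Types (A : set V) (f g x y : V) (M : R).

Lemma conv_sub A : A `<=` conv A.
Proof.
move=> x Ax; exists 1%N, (fun=> 1), (fun=> x); split=> //; first by rewrite big_ord1.
by rewrite /lincomb big_ord1 scale1r.
Qed.

Lemma conv_sub_aff A : conv A `<=` aff A.
Proof. by move=> x [k [c [p [Ap _ c1 ->]]]]; exists k, c, p. Qed.

Lemma convex_weight_gt0 k (c : 'I_k -> R) :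
  (forall i, 0 <= c i) -> \sum_i c i = 1 -> exists i, 0 < c i.
Proof.
move=> c0 c1; apply/not_existsP => cle0.
suff : \sum_i c i = 0 by rewrite c1 => /eqP; rewrite oner_eq0.
by apply: big1 => i _; apply/eqP; rewrite eq_le c0 andbT leNgt; apply/negP/cle0.
Qed.

Lemma conv_dotp_le A f M y :
  (forall o, A o -> dotp f o <= M) -> conv A y -> dotp f y <= M.
Proof.
move=> AM [k [c [p [Ap c0 c1 ->]]]]; rewrite dotp_lincomb -[M]mul1r -c1 mulr_suml.
by apply: ler_sum => i _; rewrite ler_wpM2l ?AM.
Qed.

Lemma conv_dotp_eq A f M k (c : 'I_k -> R) (p : 'I_k -> V) :
  (forall o, A o -> dotp f o <= M) -> (forall i, A (p i)) ->
  (forall i, 0 <= c i) -> \sum_i c i = 1 -> dotp f (lincomb c p) = M ->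
  forall i, 0 < c i -> dotp f (p i) = M.
Proof.
move=> AM Ap c0 c1 fM i ci.
have : \sum_j c j * (M - dotp f (p j)) == 0.
  rewrite (eq_bigr (fun j => c j * M - c j * dotp f (p j))) => [|j _]; last first.
    by rewrite mulrBr.
  by rewrite sumrB -mulr_suml c1 mul1r -dotp_lincomb fM subrr.
rewrite psumr_eq0 => [|j _]; last by rewrite mulr_ge0 ?subr_ge0 ?AM.
move/allP/(_ i (mem_index_enum i)); rewrite /= mulf_eq0 (gt_eqF ci) subr_eq0.
by move/eqP.
Qed.

Lemma conv_dotp_eq_attained A f M y : (forall o, A o -> dotp f o <= M) ->
  conv A y -> dotp f y = M -> exists2 o, A o & dotp f o = M.
Proof.
move=> AM [k [c [p [Ap c0 c1 ->]]]] fM; have [i ci] := convex_weight_gt0 c0 c1.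
by exists (p i); last exact: (conv_dotp_eq AM Ap c0 c1 fM).
Qed.

Lemma vertex_conv A v : vertex (conv A) v -> A v.
Proof.
move=> [f [M [PM [Ev _]]]].
have [Pv fv] : (conv A `&` [set x | dotp f x = M]) v by rewrite -Ev.
have [o Ao fo] := conv_dotp_eq_attained (fun o Ao => PM o (conv_sub Ao)) Pv fv.
have : [set v] o by rewrite Ev; split=> //; apply: conv_sub.
by move=> /= <-.
Qed.

Lemma exposed_vertex A f M x : (forall o, A o -> dotp f o <= M) ->
  A x -> dotp f x = M -> (forall o, A o -> dotp f o = M -> o = x) ->
  vertex (conv A) x.
Proof.
move=> AM Ax fx uniq_x; exists f, M; split; first by move=> y; apply: conv_dotp_le.
split; last by exists x.
apply/seteqP; split=> [y /= ->|y [[k [c [p [Ap c0 c1 Ey]]]] fy]] /=.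
  by split=> //; apply: conv_sub.
rewrite Ey /lincomb (eq_bigr (fun i => c i *: x)) => [|i _].
  by rewrite -scaler_suml c1 scale1r.
have [ci0|ci] := eqVneq (c i) 0; first by rewrite ci0 !scale0r.
rewrite (uniq_x (p i)) // (conv_dotp_eq AM Ap c0 c1) -?Ey //.
by rewrite lt_def ci c0.
Qed.

Lemma dotp_lt_dotpp x y : dotp y y <= dotp x x -> y != x -> dotp x y < dotp x x.
Proof.
move=> yx; rewrite -subr_eq0 -dotpp_gt0 dotpBl !raddfB /= (dotpC y x).
by move: yx; lra.
Qed.

End ConvexHull.

Section FiniteConvexHull.
Variables (R : realType) (n : nat) (Os : seq 'rV[R]_n).
Notation V := 'rV[R]_n.
Implicit Types (f g d : V) (M : R).

(* Perturbing [f] by a small multiple of [d] breaks the ties among the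
   maximizers of [f] in favour of those maximizing [d]. *)
Lemma lexicographic_refine f d M m :
  (forall o, o \in Os -> dotp f o <= M) ->
  (forall o, o \in Os -> dotp f o = M -> dotp d o <= m) ->
  exists f' M', (forall o, o \in Os -> dotp f' o <= M') /\
    forall o, o \in Os -> dotp f' o = M' <-> dotp f o = M /\ dotp d o = m.
Proof.
move=> fM dm.
have [e e0 small] := exists_small_scale (fun o => M - dotp f o) (fun o => dotp d o - m) Os.
exists (f + e *: d), (M + e * m).
have f'E o : dotp (f + e *: d) o = dotp f o + e * dotp d o by rewrite dotpDl dotpZl.
have off_face o : o \in Os -> dotp f o != M -> dotp (f + e *: d) o < M + e * m.
  move=> os foM; have fo : 0 < M - dotp f o by rewrite subr_gt0 lt_neqAle foM fM.
  have := small o os fo; have := ler_wpM2l (ltW e0) (ler_norm (dotp d o - m)).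
  by rewrite f'E mulrBr; lra.
split=> o os; have [fo|foM] := eqVneq (dotp f o) M.
- by rewrite f'E fo lerD2l ler_wpM2l ?(ltW e0) ?dm.
- exact/ltW/off_face.
- split=> [|[_ dom]]; last by rewrite f'E fo dom.
  by rewrite f'E fo => /addrI/mulfI -> //; rewrite gt_eqF.
- split=> [f'o|[fo]]; last by rewrite fo eqxx in foM.
  by have := off_face o os foM; rewrite f'o ltxx.
Qed.

(* Among the maximizers of [f] minimizing [g], a point [x] of largest norm is
   the only one maximizing [dotp x]; two lexicographic refinements expose it. *)
Lemma vertex_argmin f M g : (forall o, o \in Os -> dotp f o <= M) ->
  (exists2 o, o \in Os & dotp f o = M) ->
  exists v, [/\ vertex (conv [set` Os]) v, v \in Os, dotp f v = M &
    forall o, o \in Os -> dotp f o = M -> dotp g v <= dotp g o].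
Proof.
move=> fM [o0 o0s fo0].
have [x1 x1s [/eqP fx1 x1min]] :=
  @seq_argmax _ _ (fun o => - dotp g o) (fun o => dotp f o == M) Os
    (introT hasP (ex_intro2 _ _ o0 o0s (introT eqP fo0))).
have g_le o : o \in Os -> dotp f o = M -> dotp (- g) o <= - dotp g x1.
  by move=> os fo; rewrite dotpNl; apply: x1min os _; apply/eqP.
have [f1 [M1 [f1M1 f1E]]] := lexicographic_refine fM g_le.
have has_f1 : has (fun o => dotp f1 o == M1) Os.
  by apply/hasP; exists x1 => //; apply/eqP/(f1E x1 x1s); rewrite dotpNl.
have [x xs [/eqP f1x xmax]] := seq_argmax (fun o => dotp o o) has_f1.
have x_uniq o : o \in Os -> dotp f1 o = M1 -> o != x -> dotp x o < dotp x x.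
  by move=> os f1o; apply: dotp_lt_dotpp; apply: xmax os _; apply/eqP.
have x_le o : o \in Os -> dotp f1 o = M1 -> dotp x o <= dotp x x.
  by move=> os f1o; have [->|/(x_uniq o os f1o)/ltW] := eqVneq o x.
have [f2 [M2 [f2M2 f2E]]] := lexicographic_refine f1M1 x_le.
have [fx gx] := (f1E x xs).1 f1x.
exists x; split=> //.
- apply: (@exposed_vertex _ _ _ f2 M2) => // [|o os /(f2E o os) [f1o xo]].
    exact/(f2E x xs).
  by apply/eqP/negPn/negP => /(x_uniq o os f1o); rewrite xo ltxx.
- by move=> o os fo; have := g_le o os fo; rewrite -gx !dotpNl lerN2.
Qed.

End FiniteConvexHull.

Section AffineSpan.
Variables (R : realType) (n : nat).
Notation V := 'rV[R]_n.

Lemma lincomb_subr k (c : 'I_k -> R) (p : 'I_k -> V) b :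
  \sum_i c i = 1 -> lincomb c p - b = lincomb c (fun i => p i - b).
Proof.
move=> c1; rewrite -[b in LHS]scale1r -c1 scaler_suml /lincomb -sumrB.
by apply: eq_bigr => i _; rewrite scalerBr.
Qed.

Lemma aff_subB_sub (A : set V) b m (M : 'M_(m, n)) y :
  (forall x, A x -> (x - b <= M)%MS) -> aff A y -> (y - b <= M)%MS.
Proof.
move=> AM [k [c [p [Ap c1 ->]]]]; rewrite lincomb_subr //.
by apply: summx_sub => i _; apply/scalemx_sub/AM.
Qed.

Lemma mulmx_coord_bound m k (v : 'rV[R]_m) (Q : 'M[R]_(m, k)) d j :
  (forall i, `|v 0 i| <= d) -> `|(v *m Q) 0 j| <= d * \sum_i `|Q i j|.
Proof.
move=> vd; rewrite mxE mulr_sumr; apply: le_trans (ler_norm_sum _ _ _) _.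
by apply: ler_sum => i _; rewrite normrM ler_wpM2r.
Qed.

End AffineSpan.

Definition centroid (R : realType) n (T : seq 'rV[R]_n) : 'rV[R]_n :=
  (size T)%:R^-1 *: \sum_(t <- T) t.

Section Centroid.
Variables (R : realType) (n : nat) (T : seq 'rV[R]_n).
Hypothesis T_neq0 : T != [::].
Notation V := 'rV[R]_n.
Notation N := (size T).
Notation beta := (centroid T).

Let N_gt0 : (0 : R) < N%:R.
Proof. by rewrite ltr0n lt0n size_eq0. Qed.

Lemma conv_seq_lincomb (mu : 'I_N -> R) : (forall j, 0 <= mu j) ->
  \sum_j mu j = 1 -> conv [set` T] (\sum_j mu j *: T`_j).
Proof. by move=> mu0 mu1; exists N, mu, (fun j => T`_j); split=> // j; apply: mem_nth. Qed.

Lemma centroidE : beta = \sum_(j < N) N%:R^-1 *: T`_j.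
Proof. by rewrite /centroid (big_nth 0) big_mkord scaler_sumr. Qed.

(* Moving the centroid by at most [1/(2N)] along each [T`_j - beta] keeps all
   the barycentric weights [1/N + rho j - (sum rho)/N] nonnegative. *)
Lemma centroid_perturb (rho : 'I_N -> R) :
  (forall j, `|rho j| <= (2 * N%:R)^-1) ->
  conv [set` T] (beta + \sum_j rho j *: (T`_j - beta)).
Proof.
move=> rho_small; set s := \sum_j rho j.
have s_small : `|s| <= 2^-1.
  apply: le_trans (ler_norm_sum _ _ _) _.
  apply: le_trans (ler_sum _ (fun j _ => rho_small j)) _.
  by rewrite sumr_const card_ord -[_ *+ N]mulr_natr invfM -mulrA mulVf ?mulr1 ?gt_eqF.
pose mu j := (1 - s) / N%:R + rho j.
have -> : beta + \sum_j rho j *: (T`_j - beta) = \sum_j mu j *: T`_j.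
  under eq_bigr do rewrite scalerBr; rewrite sumrB -scaler_suml -/s.
  under [RHS]eq_bigr do rewrite scalerDl; rewrite big_split /=.
  have -> : \sum_(j < N) ((1 - s) / N%:R) *: T`_j = (1 - s) *: beta.
    by rewrite centroidE scaler_sumr; apply: eq_bigr => j _; rewrite scalerA.
  by rewrite scalerBl scale1r addrCA addrC.
apply: conv_seq_lincomb => [j|].
  have := ler_norm (- rho j); rewrite normrN /mu => /le_trans/(_ (rho_small j)).
  have : (2 * N%:R)^-1 <= (1 - s) / N%:R.
    rewrite invfM ler_wpM2r ?invr_ge0 ?(ltW N_gt0) //.
    by move: (ler_norm s) s_small (splitr (1 : R)); lra.
  by lra.
rewrite big_split /= sumr_const card_ord -/s -[_ *+ N]mulr_natr mulfVK ?gt_eqF //.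
by rewrite subrK.
Qed.

Lemma centroid_conv : conv [set` T] beta.
Proof.
rewrite centroidE; apply: conv_seq_lincomb => [j|]; first by rewrite invr_ge0 ltW.
by rewrite sumr_const card_ord -[_ *+ N]mulr_natr mulVf ?gt_eqF.
Qed.

(* [aff T - beta] lies in the row space of the matrix [M] of rows
   [T`_j - beta], so [y - beta = ((y - beta) *m pinvmx M) *m M]; these
   coefficients are linear in [y - beta], hence small when [y] is near [beta]. *)
Lemma centroid_relint : relint (conv [set` T]) beta.
Proof.
pose M := \matrix_(j < N) (T`_j - beta).
have T_sub x : [set` T] x -> (x - beta <= M)%MS.
  move=> xT; have jx : (index x T < N)%N by rewrite index_mem.
  by have := row_sub (Ordinal jx) M; rewrite rowK /= nth_index.
have aff_sub y : aff (conv [set` T]) y -> (y - beta <= M)%MS.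
  by apply: aff_subB_sub => x /conv_sub_aff; apply: aff_subB_sub.
pose Q := pinvmx M; pose B := 1 + \sum_j \sum_i `|Q i j|.
have col_le j : \sum_i `|Q i j| <= B.
  rewrite /B (bigD1 j) //= addrCA lerDl addr_ge0 //.
  by apply: sumr_ge0 => l _; apply: sumr_ge0.
have B_gt0 : 0 < B by rewrite ltr_wpDr // sumr_ge0 // => j _; apply: sumr_ge0.
pose dl := (2 * N%:R * B)^-1.
have dl_gt0 : 0 < dl by rewrite invr_gt0 !mulr_gt0.
split; first exact: centroid_conv.
exists (dl ^+ 2); split=> [|y affy near]; first by rewrite exprn_gt0.
have v_small k : `|(y - beta) 0 k| <= dl.
  rewrite leNgt; apply/negP => lt_dl.
  have : dl ^+ 2 < `|(y - beta) 0 k| ^+ 2 by rewrite !expr2 ltr_pM // ltW.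
  rewrite real_normK ?num_real // => /lt_le_trans/(_ (sqr_coord_le_dotp _ _)).
  by move/lt_trans/(_ near); rewrite ltxx.
rewrite -[y](subrK beta) addrC -(mulmxKpV (aff_sub y affy)) mulmx_sum_row.
under eq_bigr do rewrite rowK.
apply: centroid_perturb => // j; apply: le_trans (mulmx_coord_bound Q j v_small) _.
have dlB : dl * B = (2 * N%:R)^-1 by rewrite /dl invfM mulfVK ?gt_eqF.
by rewrite -dlB ler_wpM2l ?(ltW dl_gt0).
Qed.

End Centroid.

Section RelativeInterior.
Variables (R : realType) (n : nat).
Notation V := 'rV[R]_n.

Lemma relint_extend (A : set V) x y : relint A x -> A y ->
  exists2 t, 0 < t & A ((1 + t) *: x - t *: y).
Proof.
move=> [Ax [eps [eps0 near]]] Ay; set d := dotp (y - x) (y - x).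
have d0 : 0 <= d := dotpp_ge0 _.
have de0 : 0 < d + eps by rewrite ltr_wpDl.
set t := eps / (d + eps); have t0 : 0 < t by rewrite divr_gt0.
have t1 : t <= 1 by rewrite ler_pdivrMr // mul1r lerDr.
exists t => //; apply: near.
  exists 2%N, [ffun i : 'I_2 => if i == ord0 then 1 + t else - t],
    [ffun i : 'I_2 => if i == ord0 then x else y].
  split; first by case=> -[|[|]] //= ?; rewrite ffunE.
  - by rewrite big_ord_recl big_ord1 !ffunE /=; ring.
  - by rewrite /lincomb big_ord_recl big_ord1 !ffunE /= scaleNr.
have -> : (1 + t) *: x - t *: y - x = t *: (x - y).
  by rewrite scalerDl scale1r scalerBr addrAC [x + _]addrC addrK.
rewrite dotpZl dotpZr -opprB dotpNl raddfN /= opprK -/d mulrA.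
apply: (@le_lt_trans _ _ (t * d)).
  by rewrite ler_wpM2r // -[t in leRHS]mul1r ler_wpM2r // ltW.
by rewrite /t mulrAC ltr_pdivrMr // ltr_pM2l // ltrDl.
Qed.

End RelativeInterior.

Lemma barycenter_centroid (R : realType) n (P F : set 'rV[R]_n) :
  finite_set (vertices_of P F) ->
  barycenter P F = centroid (finmap.enum_fset (fset_set (vertices_of P F))).
Proof. by move=> fin; rewrite /barycenter /centroid !fsbig_finite // -sum1_size natr_sum. Qed.

Lemma hyperplane_centroid (R : realType) n (a : 'rV[R]_n) (s : seq 'rV[R]_n) :
  a != 0 -> uniq s -> {homo refl a : x / x \in s} -> hyperplane a (centroid s).
Proof.
move=> a0 s_uniq s_refl; apply/eqP; rewrite -refl_fixed // linearZ /= raddf_sum /=.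
rewrite -(big_map (refl a) xpredT id) (perm_big s) //.
apply: uniq_perm; rewrite ?map_inj_uniq //; first exact: can_inj (reflK a0).
move=> x; apply/mapP/idP => [[y ys ->]|xs]; first exact: s_refl.
by exists (refl a x); rewrite ?reflK ?s_refl.
Qed.

Section ReflectionSymmetricHull.
Variables (R : realType) (n : nat) (a : 'rV[R]_n) (A : set 'rV[R]_n).
Hypotheses (a_neq0 : a != 0) (A_refl : {homo refl a : x / A x}).
Notation P := (conv A).

Lemma refl_conv : {homo refl a : x / P x}.
Proof.
move=> _ [k [c [p [Ap c0 c1 ->]]]]; exists k, c, (refl a \o p); split=> //.
  by move=> i; apply: A_refl.
by rewrite /lincomb raddf_sum; apply: eq_bigr => i _; rewrite /= linearZ.
Qed.

Lemma refl_vertex : {homo refl a : v / vertex P v}.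
Proof.
move=> v [f [M [PM [Ev _]]]].
have [Pv fv] : (P `&` [set x | dotp f x = M]) v by rewrite -Ev.
exists (refl a f), M; split.
  by move=> y Py; rewrite refl_dotpC; apply/PM/refl_conv.
split; last by exists (refl a v).
apply/seteqP; split=> [_ -> | y [Py fy]] /=.
  by split; [apply: refl_conv | rewrite /= refl_dotpC reflK].
have : [set v] (refl a y).
  by rewrite Ev; split; [apply: refl_conv | rewrite /= -refl_dotpC].
by move=> /= <-; rewrite reflK.
Qed.

End ReflectionSymmetricHull.

Section ReflectedFace.
Variables (R : realType) (n : nat) (Os : seq 'rV[R]_n) (a c : 'rV[R]_n) (b0 : R).
Notation P := (conv [set` Os]).
Notation F := (P `&` [set x | dotp c x = b0]).
Notation Tf := [seq o <- Os | dotp c o == b0].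
Hypotheses (a_neq0 : a != 0) (Os_uniq : uniq Os).
Hypothesis Os_refl : {homo refl a : o / o \in Os}.
Hypothesis c_le : forall x, P x -> dotp c x <= b0.
Hypothesis F_neq0 : F !=set0.

Let refl_P : {homo refl a : x / P x} := refl_conv Os_refl.
Let refl_V : {homo refl a : v / vertex P v} := refl_vertex a_neq0 Os_refl.

Let c_le_Os o : o \in Os -> dotp c o <= b0.
Proof. by move=> os; apply/c_le/conv_sub. Qed.

Lemma face_attained : exists2 o, o \in Os & dotp c o = b0.
Proof. by case: F_neq0 => x [Px cx]; apply: conv_dotp_eq_attained cx. Qed.

Lemma face_vertex : exists v, vertex P v /\ F v.
Proof.
have [v [Vv vs cv _]] := vertex_argmin 0 c_le_Os face_attained.
by exists v; do !split=> //; apply: conv_sub.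
Qed.

Lemma face_conv : F = conv [set` Tf].
Proof.
have [t0 t0s ct0] := face_attained.
apply/seteqP; split=> [y [[k [w [p [Op w0 w1 Ey]]]] cy]|_ [k [w [p [Tp w0 w1 ->]]]]].
  exists k, w, (fun i => if w i == 0 then t0 else p i); split=> //.
    move=> i; case: eqP => [_|/eqP wi]; rewrite /= mem_filter ?t0s ?ct0 ?eqxx //.
    rewrite Op andbT (conv_dotp_eq c_le_Os Op w0 w1) -?Ey //.
    by rewrite lt_def wi w0.
  by rewrite Ey; apply: eq_bigr => i _; case: eqP => // ->; rewrite !scale0r.
have {}Tp i : p i \in Os /\ dotp c (p i) = b0.
  by have := Tp i; rewrite /= mem_filter => /andP[/eqP].
split; first by exists k, w, p; split=> // i; case: (Tp i).
rewrite /= dotp_lincomb (eq_bigr (fun i => w i * b0)) => [|i _].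
  by rewrite -mulr_suml w1 mul1r.
by case: (Tp i) => _ ->.
Qed.

Lemma face_ge_of_vertices g b : (forall v, vertex P v -> F v -> b <= dotp g v) ->
  forall y, F y -> b <= dotp g y.
Proof.
move=> gv y; rewrite face_conv => Ty.
have [v [Vv vs cv vmin]] := vertex_argmin g c_le_Os face_attained.
have bv : b <= dotp g v by apply: gv => //; split=> //; apply: conv_sub.
rewrite -lerN2 -dotpNl; apply: conv_dotp_le Ty => o /=.
rewrite mem_filter => /andP[/eqP co os]; rewrite dotpNl lerN2.
exact: le_trans bv (vmin o os co).
Qed.

Lemma face_refl y : F y -> b0 <= dotp c (refl a y) -> F (refl a y).
Proof.
case=> Py _ cy; split; first exact: refl_P.
by apply/le_anti; rewrite cy andbT; apply/c_le/refl_P.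
Qed.

Lemma stable_hyperplane_barycenter :
  {homo refl a : y / F y} -> hyperplane a (barycenter P F).
Proof.
move=> Fr; have fin : finite_set (vertices_of P F).
  by apply: sub_finite_set (finite_seq Os) => v [/vertex_conv].
rewrite barycenter_centroid //; apply: hyperplane_centroid => //.
  exact: finmap.fset_uniq.
move=> v; rewrite !in_fset_set // => /set_mem [Vv Fv]; apply/mem_set.
by split; [apply: refl_V | apply: Fr].
Qed.

Lemma barycenter_hyperplane_stable :
  hyperplane a (barycenter P F) -> {homo refl a : y / F y}.
Proof.
have fin : finite_set (vertices_of P F).
  by apply: sub_finite_set (finite_seq Os) => v [/vertex_conv].
rewrite barycenter_centroid // /hyperplane /centroid /=.
set vs := finmap.enum_fset _; set X := \sum_(x <- vs) x => bary.
have vs_mem w : w \in vs <-> vertex P w /\ F w.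
  have E : (w \in vs) = (w \in vertices_of P F) := in_fset_set fin w.
  by rewrite E; split=> [/set_mem|/mem_set].
have [v /vs_mem vs_v] := face_vertex.
have vs_ne0 : (size vs)%:R != 0 :> R.
  by rewrite pnatr_eq0 size_eq0; apply: contraTneq vs_v => ->.
have rX : refl a X = X.
  apply/refl_on_hyperplane/eqP; move/eqP: bary.
  by rewrite dotpZl mulf_eq0 invr_eq0 (negPf vs_ne0).
have rc_vs w : w \in vs -> dotp (refl a c) w = b0.
  apply: (@ler_sum_eq_seq _ _ _ _ (fun=> b0)) => [u /vs_mem [_ [Pu _]]|].
    by rewrite refl_dotpC; apply/c_le/refl_P.
  have -> : \sum_(u <- vs) dotp (refl a c) u = dotp (refl a c) X by rewrite raddf_sum.
  rewrite refl_dotpC rX raddf_sum; apply: eq_big_seq => u /vs_mem [_ [_ cu]].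
  exact: cu.
move=> y Fy; apply: face_refl (Fy) _; rewrite -refl_dotpC.
by apply: face_ge_of_vertices Fy => w Vw Fw; rewrite rc_vs //; apply/vs_mem.
Qed.

Lemma stable_relint_hyperplane :
  {homo refl a : y / F y} -> exists x, relint F x /\ hyperplane a x.
Proof.
move=> Fr; exists (centroid Tf); split.
  rewrite face_conv; apply: centroid_relint; have [o os co] := face_attained.
  by apply/eqP => Tf0; have := mem_filter (fun o => dotp c o == b0) o Os;
    rewrite Tf0 in_nil os co eqxx.
apply: hyperplane_centroid => //; first exact: filter_uniq.
move=> o; rewrite !mem_filter => /andP[/eqP co os].
have [_ cro] := Fr o (conj (conv_sub os) co).
by rewrite /= cro eqxx Os_refl.
Qed.

Lemma relint_hyperplane_stable :
  (exists x, relint F x /\ hyperplane a x) -> {homo refl a : y / F y}.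
Proof.
move=> [x [Fx xa]] y Fy; apply: face_refl (Fy) _.
have [[Px cx] _] := Fx; have [t t0 [Pz _]] := relint_extend Fx Fy.
have rz : refl a ((1 + t) *: x - t *: y) = (1 + t) *: x - t *: refl a y.
  by rewrite raddfB /= !linearZ /= (refl_on_hyperplane xa).
have := c_le (refl_P Pz); rewrite rz raddfB /= !dotpZr cx => h.
by rewrite -(ler_pM2l t0); lra.
Qed.

Lemma meet_hyperplane_stable : (forall v, vertex P v -> dotp v a != 0) ->
  F `&` hyperplane a !=set0 -> {homo refl a : y / F y}.
Proof.
move=> vert_a [x [[Px cx] xa]].
have f_le o : o \in Os -> dotp (c + refl a c) o <= b0 + b0.
  move=> os; rewrite dotpDl refl_dotpC.
  by apply: lerD; [apply: c_le_Os | apply/c_le/refl_P/conv_sub].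
have fx : dotp (c + refl a c) x = b0 + b0.
  by rewrite dotpDl refl_dotpC (refl_on_hyperplane xa) cx.
have [v [Vv vs fv _]] := vertex_argmin 0 f_le (conv_dotp_eq_attained f_le Px fx).
have [cv crv] : dotp c v = b0 /\ dotp c (refl a v) = b0.
  have := c_le_Os vs; have := c_le (refl_P (conv_sub vs)).
  by move: fv; rewrite dotpDl refl_dotpC; lra.
have ca := refl_dotp_invariant a_neq0 (etrans crv (esym cv)) (vert_a v Vv).
move=> y [Py cy]; apply: face_refl => //.
by rewrite -refl_dotpC (refl_on_hyperplane ca) cy.
Qed.

Lemma stable_facet_normal : (forall v, vertex P v -> dotp v a != 0) ->
  {homo refl a : y / F y} ->
  forall F' l, F `<=` F' -> outward_normal P F' l -> dotp l a = 0.
Proof.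
move=> vert_a Fr F' l FF' [_ [b1 [_ EF']]].
have [v [Vv Fv]] := face_vertex.
have := FF' _ (Fr _ Fv); have := FF' _ Fv; rewrite EF' => -[_ lv] [_ lrv].
exact: refl_dotp_invariant a_neq0 (etrans lrv (esym lv)) (vert_a v Vv).
Qed.

Lemma reflected_face_equiv :
  [/\ refl a @` F = F <-> hyperplane a (barycenter P F),
      hyperplane a (barycenter P F) <-> (exists x, relint F x /\ hyperplane a x) &
      (forall v, vertex P v -> dotp v a != 0) ->
        (F `&` hyperplane a !=set0 <-> refl a @` F = F) /\
        (refl a @` F = F ->
           forall F' l, F `<=` F' -> outward_normal P F' l -> dotp l a = 0)].
Proof.
rewrite (propext (image_involutive_eq F (reflK a_neq0))); split.
- split; [exact: stable_hyperplane_barycenter | exact: barycenter_hyperplane_stable].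
- split=> [/barycenter_hyperplane_stable|/relint_hyperplane_stable].
    exact: stable_relint_hyperplane.
  exact: stable_hyperplane_barycenter.
- move=> vert_a; split; first split.
  + exact: meet_hyperplane_stable.
  + by case/stable_relint_hyperplane => x [[Fx _] xa]; exists x.
  + exact: stable_facet_normal.
Qed.

End ReflectedFace.

Section Nondegenerate.
Variables (R : realType) (n : nat) (rs : seq 'rV[R]_n) (S : 'I_n -> 'rV[R]_n).
Hypotheses (Hrs : root_system rs) (HS : simple_system rs S).
Variable Lam : seq 'rV[R]_n.
Hypothesis HLam : forall l, l \in Lam -> chamber S l.
Notation P := (conv (Worbit S Lam)).

Lemma inW_vertex w v : inW S w -> vertex P v -> vertex P (w v).
Proof.
move=> Ww; elim: Ww v => [//|i u _ IH] v Vv /=.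
exact: (refl_vertex (simple_neq0 Hrs HS i) (@Worbit_refl_simple _ _ S Lam i) (IH v Vv)).
Qed.

Lemma chamber_interior_dotp_root l b :
  (forall i, 0 < dotp l (S i)) -> b \in rs -> dotp l b != 0.
Proof.
move=> lS rb; wlog pb : b rb / positive_root rs S b.
  move=> H; have [|pnb] := positive_root_or_opp Hrs HS rb; first exact: H.
  by rewrite -oppr_eq0 -raddfN /= H ?(root_opp Hrs).
case/andP: pb => _ /forallP pb; have [Eb _] := root_coords HS rb.
rewrite {1}Eb dotp_lincomb psumr_eq0 => [|i _]; last exact: mulr_ge0 (pb i) (ltW (lS i)).
apply: contraNN (root_neq0 Hrs rb) => /allP coords0; rewrite Eb /lincomb.
apply/eqP/big1 => i _; have := coords0 i (mem_index_enum i).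
by rewrite /= mulf_eq0 (gt_eqF (lS i)) orbF => /eqP ->; rewrite scale0r.
Qed.

Lemma nondegenerate_vertex_dotp_root v b : nondegenerate_poly S P ->
  vertex P v -> b \in rs -> dotp v b != 0.
Proof.
move=> ND Vv rb; have [w [Ww [l [Ll vE]]]] := vertex_conv Vv.
have [w' Ww' w'K] := inW_inv Hrs HS Ww.
have Vl : vertex P l by rewrite -(w'K l) -vE; apply: inW_vertex.
rewrite vE; have [b' rb' ->] := inW_dotp_root Hrs HS Ww rb.
apply: chamber_interior_dotp_root rb' => i.
by rewrite lt_def (ND l Vl (HLam Ll)) (HLam Ll).
Qed.

End Nondegenerate.

Theorem lemma2p2 (R : realType) (n : nat) (rs : seq 'rV[R]_n)
  (S : 'I_n -> 'rV[R]_n) (Lam : seq 'rV[R]_n)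
  (Hrs : root_system rs) (HS : simple_system rs S)
  (HLam : forall l, l \in Lam -> chamber S l)
  (Hfull : full_dim (conv (Worbit S Lam)))
  (F : set 'rV[R]_n) (HF : face (conv (Worbit S Lam)) F)
  (a : 'rV[R]_n) (Ha : a \in rs) :
  let P := conv (Worbit S Lam) in
  ((refl a @` F = F) <-> hyperplane a (barycenter P F)) /\
  (hyperplane a (barycenter P F) <-> exists x, relint F x /\ hyperplane a x) /\
  (nondegenerate_poly S P ->
     ((F `&` hyperplane a !=set0) <-> (refl a @` F = F)) /\
     ((refl a @` F = F) ->
        forall F' l, facet P F' -> F `<=` F' -> outward_normal P F' l ->
          dotp l a = 0)).
Proof.
move=> P.
have vert_a : nondegenerate_poly S P -> forall v, vertex P v -> dotp v a != 0.
  by move=> ND v Vv; apply: (nondegenerate_vertex_dotp_root Hrs HS HLam ND Vv Ha).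
have [Os0 EOs0] := (finite_seqP _).1 (Worbit_finite Hrs HS Lam).
have EO : Worbit S Lam = [set` undup Os0].
  by rewrite EOs0; apply/seteqP; split=> x /=; rewrite mem_undup.
have Os_refl : {homo refl a : o / o \in undup Os0}.
  by move=> o; have := @Worbit_refl_root _ _ _ _ Hrs HS Lam a o Ha; rewrite EO.
case: HF => c [b0 [c_le [-> F_neq0]]].
rewrite /P EO in c_le F_neq0 vert_a *.
have [eq12 eq23 nondeg] :=
  reflected_face_equiv (root_neq0 Hrs Ha) (undup_uniq Os0) Os_refl c_le F_neq0.
do 2!split=> //; move=> /vert_a/nondeg [eq41 normal].
by split=> // stable F' l _; apply: normal.
Qed.
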